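(* Let $S$ be a set of axis-parallel unit squares in the plane. Then it is possible to maintain a conflict-free coloring of $S$ (with respect to points) under insertions and deletions using $O(\log n)$ colors and $O(\log n)$ recolorings per insertion and per deletion, where $n$ is the current number of squares in $S$.
   Context: A coloring of a set $S$ of regions is conflict-free (with respect to points) if for every point $q$ lying in at least one region of $S$, among the regions of $S$ containing $q$ there is one whose color is unique among them. The number of recolorings of an update is the number of objects already present whose color is changed. *)

From Stdlib Require Import Reals List Arith.
Import ListNotations.
Open Scope R_scope.

(* An axis-parallel unit square is identified with its lower-left corner
   (a, b); as a region it is the closed square [a, a+1] x [b, b+1]. *)
Definition square := (R * R)%type.

Definition in_square (s : square) (q : R * R) : Prop :=
  fst s <= fst q <= fst s + 1 /\ snd s <= snd q <= snd s + 1.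

Inductive update : Type :=
| Ins (s : square)
| Del (s : square).

(* Histories are lists of updates, MOST RECENT FIRST. *)
Fixpoint present (h : list update) (s : square) : Prop :=
  match h with
  | [] => False
  | Ins t :: h' => s = t \/ present h' s
  | Del t :: h' => s <> t /\ present h' s
  end.

Fixpoint valid (h : list update) : Prop :=
  match h with
  | [] => True
  | Ins t :: h' => valid h' /\ ~ present h' t
  | Del t :: h' => valid h' /\ present h' t
  end.

(* Current number of squares (correct for valid histories). *)
Fixpoint cur_size (h : list update) : nat :=
  match h with
  | [] => 0%nat
  | Ins _ :: h' => S (cur_size h')
  | Del _ :: h' => pred (cur_size h')
  end.

Definition conflict_free (S : square -> Prop) (col : square -> nat) : Prop :=
  forall q : R * R,
    (exists s, S s /\ in_square s q) ->
    exists s, S s /\ in_square s q /\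
      forall s', S s' -> in_square s' q -> s' <> s -> col s' <> col s.

Definition uses_at_most (S : square -> Prop) (col : square -> nat) (k : nat) : Prop :=
  exists cs : list nat, (length cs <= k)%nat /\ forall s, S s -> In (col s) cs.

Definition recolorings_at_most (Sold Snew : square -> Prop)
    (col_old col_new : square -> nat) (k : nat) : Prop :=
  exists L : list square, (length L <= k)%nat /\
    forall s, Sold s -> Snew s -> col_old s <> col_new s -> In s L.

(* O(log n) with an explicit constant c; the +1 handles n <= 1. *)
Definition logbound (c n : nat) : nat := (c * (Nat.log2 n + 1))%nat.

(* Each square is filed under the unit grid cell containing its lower-left corner. Squares
   through a common point lie in cells that differ by at most one in each coordinate, so
   giving the four parity classes of cells disjoint palettes reduces the problem to a single
   cell. There, the squares containing a point q are those whose corner lies in a set that is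
   monotone in the lexicographic order and cut by a horizontal halfplane.

   The corners of a cell are kept in a 2-3 tree sorted lexicographically. Every node hands
   the colour (its height, highest or lowest, its position among its siblings) to its highest
   and to its lowest point, and a point keeps the colour of the highest node at which it is
   extreme. A range of the above shape either contains a whole child of the root together
   with one of its points in the halfplane, and then the extreme point of that child has a
   unique colour, or all its points lie in one child, where we recurse.

   The colour of a point only depends on the set of (node, position) slots in which it is
   extreme. An insertion or deletion changes O(1) slots per level of the tree, hence O(log n)
   slots, and each slot affects the colours of only two points; the height of the tree also
   bounds the number of colours. *)

From Stdlib Require Import Reals List Arith Lia Lra Classical ZArith Sorted.
Import ListNotations.
Open Scope R_scope.

Section StronglySortedFacts.

Variables (A : Type) (lt : A -> A -> Prop).

Lemma StronglySorted_app_iff (l1 l2 : list A) :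
  StronglySorted lt (l1 ++ l2) <->
  StronglySorted lt l1 /\ StronglySorted lt l2 /\
  (forall x y, In x l1 -> In y l2 -> lt x y).
Proof.
  induction l1 as [|a l1 IH]; simpl.
  - split; [intros H; repeat split; [constructor | auto | intros x y []] | tauto].
  - split.
    + intros [Hs Ha]%StronglySorted_inv.
      apply IH in Hs as (H1 & H2 & H3). rewrite Forall_forall in Ha.
      repeat split; auto.
      * constructor; auto. apply Forall_forall; intros; apply Ha, in_or_app; auto.
      * intros x y [<-|Hx] Hy; auto. apply Ha, in_or_app; auto.
    + intros ((H1 & Ha)%StronglySorted_inv & H2 & H3). rewrite Forall_forall in Ha.
      constructor.
      * apply IH; repeat split; auto.
      * apply Forall_forall; intros y [Hy|Hy]%in_app_or; auto.
Qed.

Lemma StronglySorted_filter (f : A -> bool) (l : list A) :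
  StronglySorted lt l -> StronglySorted lt (filter f l).
Proof.
  induction 1 as [|a l _ IH Ha]; simpl; [constructor|].
  destruct (f a); auto. constructor; auto.
  rewrite Forall_forall in *. intros y [Hy _]%filter_In; auto.
Qed.

Lemma StronglySorted_NoDup (l : list A) :
  (forall x, ~ lt x x) -> StronglySorted lt l -> NoDup l.
Proof.
  intros Hirr. induction 1 as [|a l _ IH Ha]; constructor; auto.
  rewrite Forall_forall in Ha. intros Hin. exact (Hirr a (Ha a Hin)).
Qed.

Lemma StronglySorted_app_disjoint (l1 l2 : list A) (x : A) :
  (forall x, ~ lt x x) -> StronglySorted lt (l1 ++ l2) -> In x l1 -> ~ In x l2.
Proof.
  intros Hirr (_ & _ & H)%StronglySorted_app_iff H1 H2. exact (Hirr x (H x x H1 H2)).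
Qed.

End StronglySortedFacts.

Definition square_eq_dec (p q : square) : {p = q} + {p <> q}.
Proof. decide equality; apply Req_dec_T. Defined.

Definition lex_lt (p q : square) : Prop :=
  fst p < fst q \/ (fst p = fst q /\ snd p < snd q).

Definition lex_lt_dec (p q : square) : {lex_lt p q} + {~ lex_lt p q}.
Proof.
  unfold lex_lt.
  destruct (Rlt_dec (fst p) (fst q)); [left; left; assumption|].
  destruct (Req_dec_T (fst p) (fst q)); [destruct (Rlt_dec (snd p) (snd q))|].
  - left; right; split; assumption.
  - right; intros [H|[_ H]]; contradiction.
  - right; intros [H|[H _]]; contradiction.
Defined.

Lemma lex_lt_trans (p q r : square) : lex_lt p q -> lex_lt q r -> lex_lt p r.
Proof. unfold lex_lt; intros [|[]] [|[]]; lra. Qed.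

Lemma lex_lt_irrefl (p : square) : ~ lex_lt p p.
Proof. unfold lex_lt; intros [|[]]; lra. Qed.

Lemma lex_lt_total (p q : square) : p <> q -> ~ lex_lt p q -> lex_lt q p.
Proof.
  destruct p as [a b], q as [c d]; unfold lex_lt; simpl; intros Hne Hn.
  destruct (Rtotal_order a c) as [|[<-|]]; [exfalso; apply Hn; auto| |auto].
  destruct (Rtotal_order b d) as [|[<-|]]; [exfalso; apply Hn; auto|congruence|auto].
Qed.

Notation lex_sorted := (StronglySorted lex_lt).

Lemma lex_sorted_app_disjoint (l1 l2 : list square) (x : square) :
  lex_sorted (l1 ++ l2) -> In x l1 -> ~ In x l2.
Proof. apply StronglySorted_app_disjoint, lex_lt_irrefl. Qed.

Fixpoint insert_sorted (x : square) (l : list square) : list square :=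
  match l with
  | [] => [x]
  | y :: l' => if lex_lt_dec x y then x :: l else y :: insert_sorted x l'
  end.

Lemma in_insert_sorted (x z : square) (l : list square) :
  In z (insert_sorted x l) <-> z = x \/ In z l.
Proof.
  induction l as [|y l IH]; simpl; [intuition congruence|].
  destruct (lex_lt_dec x y); simpl; rewrite ?IH; intuition congruence.
Qed.

Lemma insert_sorted_sorted (x : square) (l : list square) :
  lex_sorted l -> ~ In x l -> lex_sorted (insert_sorted x l).
Proof.
  induction 1 as [|y l Hl IH Hy]; simpl; intros Hx.
  - repeat constructor.
  - rewrite Forall_forall in Hy.
    destruct (lex_lt_dec x y) as [Hxy|Hxy]; constructor.
    + constructor; [auto | rewrite Forall_forall; auto].
    + constructor; [auto | rewrite Forall_forall; eauto using lex_lt_trans].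
    + apply IH; tauto.
    + apply Forall_forall. intros z [->|Hz]%in_insert_sorted; auto.
      apply lex_lt_total; auto.
Qed.

Lemma insert_sorted_app (x : square) (l1 l2 : list square) :
  (forall y, In y l1 -> ~ lex_lt x y) ->
  insert_sorted x (l1 ++ l2) = l1 ++ insert_sorted x l2.
Proof.
  induction l1 as [|y l1 IH]; intros H; simpl; auto.
  destruct (lex_lt_dec x y); [exfalso; apply (H y); simpl; auto|].
  rewrite IH; auto. intros z Hz; apply H; simpl; auto.
Qed.

Lemma insert_sorted_app_r (x : square) (l1 l2 : list square) :
  (forall y, In y l2 -> lex_lt x y) -> insert_sorted x (l1 ++ l2) = insert_sorted x l1 ++ l2.
Proof.
  intros H. induction l1 as [|y l1 IH]; simpl.
  - destruct l2 as [|m l2]; simpl; auto.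
    destruct lex_lt_dec as [_|Hn]; [reflexivity | destruct Hn; apply H; left; auto].
  - destruct lex_lt_dec; [reflexivity | rewrite IH; reflexivity].
Qed.

(** * 2-3 trees and their colouring *)

Inductive tree : Type :=
| Lf (p : square)
| N2 (a b : tree)
| N3 (a b c : tree).

Fixpoint elems (t : tree) : list square :=
  match t with
  | Lf p => [p]
  | N2 a b => elems a ++ elems b
  | N3 a b c => elems a ++ elems b ++ elems c
  end.

Fixpoint height (t : tree) : nat :=
  match t with
  | Lf _ => 0
  | N2 a _ | N3 a _ _ => S (height a)
  end.

Inductive balanced : nat -> tree -> Prop :=
| balanced_Lf p : balanced 0 (Lf p)
| balanced_N2 h a b : balanced h a -> balanced h b -> balanced (S h) (N2 a b)
| balanced_N3 h a b c :
    balanced h a -> balanced h b -> balanced h c -> balanced (S h) (N3 a b c).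

Lemma balanced_height (h : nat) (t : tree) : balanced h t -> height t = h.
Proof. induction 1; simpl; auto. Qed.

Lemma balanced_size (h : nat) (t : tree) : balanced h t -> (2 ^ h <= length (elems t))%nat.
Proof. induction 1; simpl; rewrite ?length_app; simpl; lia. Qed.

Definition subtrees (t : tree) : list tree :=
  match t with
  | Lf _ => []
  | N2 a b => [a; b]
  | N3 a b c => [a; b; c]
  end.

Definition indexed (ts : list tree) : list (tree * nat) := combine ts (seq 0 (length ts)).

Definition children (t : tree) : list (tree * nat) := indexed (subtrees t).

Ltac destruct_children H :=
  simpl in H; repeat destruct H as [H|H]; try contradiction; injection H as <- <-.

Lemma children_balanced (h : nat) (t c : tree) (i : nat) :
  balanced (S h) t -> In (c, i) (children t) -> balanced h c.
Proof. inversion 1; subst; intros Hc; destruct_children Hc; assumption. Qed.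

Lemma children_incl (t c : tree) (i : nat) (q : square) :
  In (c, i) (children t) -> In q (elems c) -> In q (elems t).
Proof.
  intros Hc Hq; destruct t; destruct_children Hc; simpl; rewrite ?in_app_iff; auto.
Qed.

Lemma in_some_child (h : nat) (t : tree) (q : square) :
  balanced (S h) t -> In q (elems t) -> exists c i, In (c, i) (children t) /\ In q (elems c).
Proof.
  inversion 1; subst; simpl; rewrite ?in_app_iff; intros Hq;
  repeat destruct Hq as [Hq|Hq]; eexists _, _; simpl; eauto 6.
Qed.

Lemma children_index_inj (t c c' : tree) (i : nat) :
  In (c, i) (children t) -> In (c', i) (children t) -> c = c'.
Proof.
  intros H1 H2; destruct t; simpl in *;
  repeat destruct H1 as [H1|H1]; repeat destruct H2 as [H2|H2];
  try contradiction; congruence.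
Qed.

Lemma children_sorted (t c : tree) (i : nat) :
  lex_sorted (elems t) -> In (c, i) (children t) -> lex_sorted (elems c).
Proof.
  intros Hs Hc; destruct t; destruct_children Hc; simpl in Hs;
  repeat rewrite StronglySorted_app_iff in Hs; tauto.
Qed.

Lemma children_ordered (t c c' : tree) (i j : nat) (x y : square) :
  lex_sorted (elems t) -> In (c, i) (children t) -> In (c', j) (children t) ->
  (i < j)%nat -> In x (elems c) -> In y (elems c') -> lex_lt x y.
Proof.
  intros Hs H1 H2 Hij Hx Hy.
  destruct t; simpl in Hs; repeat rewrite StronglySorted_app_iff in Hs;
  destruct_children H1; destruct_children H2; try lia;
  decompose [and] Hs; eauto using in_or_app.
Qed.

Lemma child_of_elem_unique (t c c' : tree) (i j : nat) (q : square) :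
  lex_sorted (elems t) -> In (c, i) (children t) -> In (c', j) (children t) ->
  In q (elems c) -> In q (elems c') -> c = c' /\ i = j.
Proof.
  intros Hs H1 H2 Hq Hq'.
  destruct (lt_eq_lt_dec i j) as [[Hl| <-]|Hl].
  - destruct (lex_lt_irrefl q); eapply (children_ordered t c c'); eauto.
  - eauto using children_index_inj.
  - destruct (lex_lt_irrefl q); eapply (children_ordered t c' c); eauto.
Qed.

Lemma children_index_lt (t c : tree) (i : nat) : In (c, i) (children t) -> (i < 3)%nat.
Proof. intros Hc; destruct t; destruct_children Hc; lia. Qed.

Definition in_halfline (up : bool) (c : R) (p : square) : Prop :=
  if up then c <= snd p else snd p <= c.

Definition farther (up : bool) (p q : square) : square :=
  if Rle_dec (snd p) (snd q) then (if up then q else p) else (if up then p else q).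

Lemma farther_choice (up : bool) (p q : square) : farther up p q = p \/ farther up p q = q.
Proof. unfold farther; destruct Rle_dec, up; auto. Qed.

Lemma farther_in_halfline (up : bool) (c : R) (p q : square) :
  in_halfline up c p \/ in_halfline up c q -> in_halfline up c (farther up p q).
Proof. unfold farther, in_halfline; destruct Rle_dec, up; lra. Qed.

Fixpoint extreme (up : bool) (t : tree) : square :=
  match t with
  | Lf p => p
  | N2 a b => farther up (extreme up a) (extreme up b)
  | N3 a b c => farther up (extreme up a) (farther up (extreme up b) (extreme up c))
  end.

Lemma extreme_in (up : bool) (t : tree) : In (extreme up t) (elems t).
Proof.
  induction t; simpl; auto;
  repeat match goal with |- context [farther up ?p ?q] =>
    destruct (farther_choice up p q) as [-> | ->] end;
  rewrite ?in_app_iff; auto.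
Qed.

Lemma extreme_in_halfline (up : bool) (c : R) (t : tree) (p : square) :
  In p (elems t) -> in_halfline up c p -> in_halfline up c (extreme up t).
Proof.
  induction t; simpl; rewrite ?in_app_iff; intros Hp Hc;
  [destruct Hp as [<-|[]]; exact Hc | ..];
  repeat (apply farther_in_halfline; destruct Hp as [Hp|Hp]; [left; auto | right]); auto.
Qed.

Definition special (t : tree) (q : square) : Prop := q = extreme true t \/ q = extreme false t.

Definition special_dec (t : tree) (q : square) : {special t q} + {~ special t q}.
Proof.
  unfold special.
  destruct (square_eq_dec q (extreme true t)); [left; auto|].
  destruct (square_eq_dec q (extreme false t)); [left; auto|right; tauto].
Defined.

Definition is_highest (t : tree) (q : square) : bool :=
  if square_eq_dec q (extreme true t) then true else false.

Lemma is_highest_inj (t : tree) (p q : square) :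
  special t p -> special t q -> is_highest t p = is_highest t q -> p = q.
Proof.
  unfold special, is_highest; intros Hp Hq.
  destruct square_eq_dec, square_eq_dec; intuition congruence.
Qed.

(* A colour is (level, highest?, slot): the height of the node at which the point is extreme,
   whether it is that node's highest or lowest point, and the node's position among its
   siblings (3 at a root). *)
Definition color := (nat * bool * nat)%type.
Definition level (c : color) : nat := fst (fst c).
Definition slot (c : color) : nat := snd c.

Fixpoint tree_color (t : tree) (s : nat) (q : square) : color :=
  if special_dec t q then (height t, is_highest t q, s) else
  match t with
  | Lf _ => (0%nat, true, s)  (* only reached for [q] outside [t] *)
  | N2 a b => if in_dec square_eq_dec q (elems a) then tree_color a 0 q else tree_color b 1 q
  | N3 a b c =>
      if in_dec square_eq_dec q (elems a) then tree_color a 0 q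
      else if in_dec square_eq_dec q (elems b) then tree_color b 1 q
      else tree_color c 2 q
  end.

Lemma tree_color_special (t : tree) (s : nat) (q : square) :
  special t q -> tree_color t s q = (height t, is_highest t q, s).
Proof. intros Hq; destruct t; simpl; destruct special_dec; tauto. Qed.

Lemma tree_color_child (t c : tree) (s i : nat) (q : square) :
  lex_sorted (elems t) -> In (c, i) (children t) -> In q (elems c) -> ~ special t q ->
  tree_color t s q = tree_color c i q.
Proof.
  intros Hs Hc Hq Hns.
  assert (Hin : forall c' j, In (c', j) (children t) -> In q (elems c') -> c' = c /\ j = i)
    by (intros; eapply child_of_elem_unique; eauto).
  destruct t as [p|a b|a b d]; [destruct_children Hc | ..];
  simpl; destruct special_dec; try contradiction;
  repeat match goal with |- context [in_dec _ ?q (elems ?x)] =>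
    let Hx := fresh "Hx" in
    destruct (in_dec square_eq_dec q (elems x)) as [Hx|Hx];
    [ match goal with |- tree_color x ?j q = _ =>
        destruct (Hin x j) as [<- <-]; [simpl; auto | exact Hx | reflexivity] end | ] end;
  destruct_children Hc; first [reflexivity | contradiction].
Qed.

Lemma tree_color_bounds (h : nat) (t : tree) (s : nat) (q : square) :
  balanced h t -> (s <= 3)%nat ->
  (level (tree_color t s q) <= h /\ slot (tree_color t s q) <= 3)%nat.
Proof.
  intros Hb; revert s.
  induction Hb as [p|h a b Ha IHa _ IHb|h a b c Ha IHa _ IHb _ IHc]; intros s Hs; simpl;
  destruct special_dec; unfold level, slot in *; simpl; try lia;
  try (apply balanced_height in Ha; lia);
  specialize (IHa 0%nat ltac:(lia)); specialize (IHb 1%nat ltac:(lia));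
  try specialize (IHc 2%nat ltac:(lia));
  repeat destruct in_dec; lia.
Qed.

(** * Conflict-freeness inside a tree *)

Lemma special_in (t : tree) (q : square) : special t q -> In q (elems t).
Proof. intros [-> | ->]; apply extreme_in. Qed.

Lemma tree_color_level_lt (h : nat) (t : tree) (s : nat) (q : square) :
  balanced h t -> lex_sorted (elems t) -> In q (elems t) -> ~ special t q ->
  (level (tree_color t s q) < h)%nat.
Proof.
  intros Hb Hs Hq Hns. destruct h as [|h].
  - inversion Hb; subst. destruct Hq as [<-|[]]. destruct Hns; left; reflexivity.
  - destruct (in_some_child h t q Hb Hq) as (c & i & Hc & Hqc).
    rewrite (tree_color_child t c s i q) by auto.
    destruct (tree_color_bounds h c i q) as [Hl _];
      [eauto using children_balanced | apply children_index_lt in Hc; lia | lia].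
Qed.

Lemma level_tree_color_special (t : tree) (s : nat) (q : square) :
  special t q -> level (tree_color t s q) = height t.
Proof. intros Hq; rewrite tree_color_special; auto. Qed.

Lemma tree_color_eq_special (t : tree) (s : nat) (p q : square) :
  special t p -> special t q -> tree_color t s p = tree_color t s q -> p = q.
Proof.
  intros Hp Hq E. rewrite !tree_color_special in E by auto.
  injection E as E. eauto using is_highest_inj.
Qed.

(* Level and slot of the colour identify the node among [t] and its children, and the kind
   identifies the extreme. *)
Lemma tree_color_unique_of_special_child (h : nat) (t c : tree) (i s : nat) (p p' : square) :
  balanced (S h) t -> lex_sorted (elems t) -> In (c, i) (children t) -> special c p ->
  In p' (elems t) -> tree_color t s p' = tree_color t s p -> p' = p.
Proof.
  intros Hb Hs Hc Hp Hp' E.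
  assert (Hht : height t = S h) by (eapply balanced_height; eauto).
  assert (Hhc : height c = h) by eauto using balanced_height, children_balanced.
  assert (Hlt : forall q, In q (elems t) -> ~ special t q ->
                (level (tree_color t s q) < S h)%nat)
    by eauto using tree_color_level_lt.
  destruct (special_dec t p') as [Hsp'|Hnsp'];
  destruct (special_dec t p) as [Hsp|Hnsp].
  - eauto using tree_color_eq_special.
  - specialize (Hlt p ltac:(eauto using children_incl, special_in) Hnsp).
    rewrite <- E, level_tree_color_special in Hlt by auto; lia.
  - specialize (Hlt p' Hp' Hnsp'). rewrite E, level_tree_color_special in Hlt by auto; lia.
  - destruct (in_some_child h t p' Hb Hp') as (c' & j & Hc' & Hpc').
    rewrite (tree_color_child t c' s j p'), (tree_color_child t c s i p) in E
      by eauto using special_in.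
    destruct (special_dec c' p') as [Hsc'|Hnsc'].
    + rewrite !tree_color_special in E by auto. injection E as _ Ek <-.
      pose proof (children_index_inj t c' c j Hc' Hc) as <-.
      eauto using is_highest_inj.
    + pose proof (tree_color_level_lt h c' j p') as Hl.
      rewrite E, level_tree_color_special in Hl by auto.
      specialize (Hl ltac:(eauto using children_balanced) ltac:(eauto using children_sorted)
                     Hpc' Hnsc').
      rewrite Hhc in Hl. lia.
Qed.

Lemma tree_color_eq_child (h : nat) (t c : tree) (i s : nat) (p p' : square) :
  balanced (S h) t -> lex_sorted (elems t) -> In (c, i) (children t) ->
  In p (elems c) -> In p' (elems c) ->
  tree_color t s p = tree_color t s p' -> tree_color c i p = tree_color c i p'.
Proof.
  intros Hb Hs Hc Hp Hp' E.
  assert (Hht : height t = S h) by (eapply balanced_height; eauto).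
  assert (Hlt : forall q, In q (elems c) -> ~ special t q ->
                (level (tree_color t s q) < S h)%nat)
    by eauto using tree_color_level_lt, children_incl.
  destruct (special_dec t p) as [Hsp|Hnsp]; destruct (special_dec t p') as [Hsp'|Hnsp'].
  - f_equal. eauto using tree_color_eq_special.
  - specialize (Hlt p' Hp' Hnsp'). rewrite <- E, level_tree_color_special in Hlt by auto. lia.
  - specialize (Hlt p Hp Hnsp). rewrite E, level_tree_color_special in Hlt by auto. lia.
  - rewrite !(tree_color_child t c s i) in E by auto. exact E.
Qed.

Definition monotone_set (U : square -> Prop) : Prop :=
  (forall p q, lex_lt p q -> U p -> U q) \/ (forall p q, lex_lt p q -> U q -> U p).

Lemma children_straddling_unique (t c c' : tree) (i j : nat) (U : square -> Prop)
    (x y x' y' : square) :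
  lex_sorted (elems t) -> monotone_set U ->
  In (c, i) (children t) -> In (c', j) (children t) ->
  In x (elems c) -> U x -> In y (elems c) -> ~ U y ->
  In x' (elems c') -> U x' -> In y' (elems c') -> ~ U y' -> c = c'.
Proof.
  intros Hs HU Hc Hc' Hx Ux Hy Uy Hx' Ux' Hy' Uy'.
  destruct (lt_eq_lt_dec i j) as [[Hl| <-]|Hl];
    [exfalso | eauto using children_index_inj | exfalso];
  destruct HU as [HU|HU]; eauto 7 using children_ordered.
Qed.

Definition unique_color (t : tree) (s : nat) (P : square -> Prop) (p : square) : Prop :=
  In p (elems t) /\ P p /\
  forall p', In p' (elems t) -> P p' -> p' <> p -> tree_color t s p' <> tree_color t s p.

Lemma range_in_one_child (h : nat) (t c : tree) (i : nat) (U : square -> Prop) (up : bool)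
    (y0 : R) (p0 : square) :
  balanced (S h) t -> lex_sorted (elems t) -> monotone_set U ->
  ~ (exists c' j, In (c', j) (children t) /\ (forall q, In q (elems c') -> U q) /\
       exists q, In q (elems c') /\ in_halfline up y0 q) ->
  In (c, i) (children t) -> In p0 (elems c) -> U p0 -> in_halfline up y0 p0 ->
  forall p, In p (elems t) -> U p -> in_halfline up y0 p -> In p (elems c).
Proof.
  intros Hb Hs HU Hnone Hc Hp0 U0 Y0 p Hp Up Yp.
  assert (Hout : forall c' j q, In (c', j) (children t) -> In q (elems c') ->
                   in_halfline up y0 q -> exists y, In y (elems c') /\ ~ U y).
  { intros c' j q Hc' Hq Yq. apply NNPP; intros Hall. apply Hnone.
    exists c', j. repeat split; eauto.
    intros z Hz. apply NNPP; intros Uz. eauto. }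
  destruct (in_some_child h t p Hb Hp) as (c' & j & Hc' & Hpc').
  destruct (Hout c i p0) as (y & Hy & Uy); auto.
  destruct (Hout c' j p) as (y' & Hy' & Uy'); auto.
  replace c with c'; auto.
  eapply (children_straddling_unique t c' c j i U p y' p0 y); eauto.
Qed.

Theorem tree_conflict_free (h : nat) (t : tree) (s : nat) (U : square -> Prop) (up : bool)
    (y0 : R) :
  balanced h t -> lex_sorted (elems t) -> monotone_set U ->
  (exists p, In p (elems t) /\ U p /\ in_halfline up y0 p) ->
  exists p, unique_color t s (fun p => U p /\ in_halfline up y0 p) p.
Proof.
  revert t s. induction h as [|h IH]; intros t s Hb Hs HU (p0 & Hp0 & U0 & Y0).
  - inversion Hb; subst. destruct Hp0 as [->|[]].
    exists p0. split; [left; reflexivity|]. split; [auto|].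
    intros p' [<-|[]]; congruence.
  - destruct (classic (exists c j, In (c, j) (children t) /\ (forall q, In q (elems c) -> U q) /\
                         exists q, In q (elems c) /\ in_halfline up y0 q))
      as [(c & j & Hc & Hfull & q & Hq & Yq)|Hnone].
    + exists (extreme up c).
      assert (Hsp : special c (extreme up c)) by (destruct up; [left|right]; reflexivity).
      repeat split; eauto using children_incl, extreme_in, extreme_in_halfline.
      intros p' Hp' _ Hne E. eauto using tree_color_unique_of_special_child.
    + destruct (in_some_child h t p0 Hb Hp0) as (c & i & Hc & Hp0c).
      assert (Hin := range_in_one_child h t c i U up y0 p0 Hb Hs HU Hnone Hc Hp0c U0 Y0).
      destruct (IH c i) as (p & Hp & [Up Yp] & Huniq);
        eauto using children_balanced, children_sorted.
      exists p. repeat split; eauto using children_incl.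
      intros p' Hp' [Up' Yp'] Hne E.
      apply (Huniq p'); eauto using tree_color_eq_child.
Qed.

(** * The colour of a point is determined by its slots *)

Fixpoint inner (t : tree) : list (tree * nat) :=
  match t with
  | Lf _ => []
  | N2 a b => ((a, 0%nat) :: inner a) ++ ((b, 1%nat) :: inner b)
  | N3 a b c => ((a, 0%nat) :: inner a) ++ ((b, 1%nat) :: inner b) ++ ((c, 2%nat) :: inner c)
  end.

Definition slots (t : tree) (s : nat) : list (tree * nat) := (t, s) :: inner t.

Lemma in_inner_iff (t : tree) (e : tree * nat) :
  In e (inner t) <-> exists c i, In (c, i) (children t) /\ In e (slots c i).
Proof.
  unfold slots; split.
  - destruct t as [p|a b|a b c]; simpl; intros He;
    repeat (destruct He as [He|He] || apply in_app_or in He); try contradiction;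
    first [ exists a, 0%nat; split; [left; reflexivity | now (left + right)]
          | exists b, 1%nat; split; [right; left; reflexivity | now (left + right)]
          | exists c, 2%nat; split; [right; right; left; reflexivity | now (left + right)] ].
  - intros (c & i & Hc & He). destruct t; destruct_children Hc;
    simpl in *; repeat (rewrite in_app_iff; simpl); tauto.
Qed.

Lemma in_inner_below (h : nat) (t : tree) (e : tree * nat) :
  balanced h t -> In e (inner t) ->
  incl (elems (fst e)) (elems t) /\ (height (fst e) < height t)%nat.
Proof.
  revert t; induction h as [|h IH]; intros t Hb He.
  - inversion Hb; subst; contradiction.
  - apply in_inner_iff in He as (c & i & Hc & [<-|He]).
    + simpl. split; [intros x; eauto using children_incl|].
      rewrite (balanced_height (S h) t Hb), (balanced_height h c)
        by eauto using children_balanced. lia.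
    + destruct (IH c) as [Hincl Hlt]; [eauto using children_balanced | exact He |].
      split; [intros x Hx; eauto using children_incl|].
      rewrite (balanced_height (S h) t Hb).
      rewrite (balanced_height h c) in Hlt by eauto using children_balanced. lia.
Qed.

Lemma tree_color_highest_slot (h : nat) (t : tree) (s : nat) (q : square) :
  balanced h t -> lex_sorted (elems t) -> In q (elems t) ->
  exists T σ, In (T, σ) (slots t s) /\ special T q /\
    tree_color t s q = (height T, is_highest T q, σ) /\
    forall T' σ', In (T', σ') (slots t s) -> special T' q ->
      (T', σ') = (T, σ) \/ (height T' < height T)%nat.
Proof.
  revert t s; induction h as [|h IH]; intros t s Hb Hs Hq.
  - inversion Hb; subst. destruct Hq as [->|[]].
    exists (Lf q), s. repeat split; [left; auto | left; auto | |].
    + apply tree_color_special; left; auto.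
    + intros T' σ' [E|[]] _; auto.
  - destruct (special_dec t q) as [Hsp|Hnsp].
    + exists t, s. repeat split; [left; auto | auto | apply tree_color_special; auto |].
      intros T' σ' [E|HT] _; [auto|right].
      apply (in_inner_below (S h) t (T', σ')); auto.
    + destruct (in_some_child h t q Hb Hq) as (c & i & Hc & Hqc).
      destruct (IH c i) as (T & σ & HT & Hsp & Hcol & Hmax);
        eauto using children_balanced, children_sorted.
      exists T, σ. repeat split; auto.
      * right. apply in_inner_iff. eauto.
      * rewrite (tree_color_child t c s i q); auto.
      * intros T' σ' [E|HT'] Hsp'; [injection E as <- <-; contradiction|].
        apply Hmax; auto.
        apply in_inner_iff in HT' as (c' & j & Hc' & HT').
        assert (Hqc' : In q (elems c')).
        { destruct HT' as [E|HT']; [injection E as <- <-; apply special_in; auto|].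
          apply (in_inner_below h c' (T', σ')); eauto using children_balanced, special_in. }
        destruct (child_of_elem_unique t c c' i j q) as [<- <-]; auto.
Qed.

Lemma tree_color_determined (h1 h2 : nat) (t1 t2 : tree) (s1 s2 : nat) (q : square) :
  balanced h1 t1 -> lex_sorted (elems t1) -> In q (elems t1) ->
  balanced h2 t2 -> lex_sorted (elems t2) -> In q (elems t2) ->
  (forall T σ, special T q -> In (T, σ) (slots t1 s1) <-> In (T, σ) (slots t2 s2)) ->
  tree_color t1 s1 q = tree_color t2 s2 q.
Proof.
  intros Hb1 Hs1 Hq1 Hb2 Hs2 Hq2 Hagree.
  destruct (tree_color_highest_slot h1 t1 s1 q) as (T1 & σ1 & H1 & Hsp1 & -> & Hmax1); auto.
  destruct (tree_color_highest_slot h2 t2 s2 q) as (T2 & σ2 & H2 & Hsp2 & -> & Hmax2); auto.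
  destruct (Hmax2 T1 σ1) as [E|Hlt]; [apply Hagree; auto | auto | congruence |].
  destruct (Hmax1 T2 σ2) as [E|Hlt']; [apply Hagree; auto | auto | congruence | lia].
Qed.

Definition differ_by {A : Type} (l1 l2 : list A) (k : nat) : Prop :=
  exists L, (length L <= k)%nat /\
    forall e, (In e l1 /\ ~ In e l2) \/ (In e l2 /\ ~ In e l1) -> In e L.

Lemma differ_by_step {A : Type} (l1 l2 l1' l2' Z : list A) (k : nat) :
  differ_by l1 l2 k ->
  (forall e, In e l1' -> In e l1 \/ In e Z \/ In e l2') ->
  (forall e, In e l2' -> In e l2 \/ In e Z \/ In e l1') ->
  (forall e, In e l1 -> In e l1' \/ In e Z) -> (forall e, In e l2 -> In e l2' \/ In e Z) ->
  differ_by l1' l2' (k + length Z).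
Proof.
  intros (L & HL & HLe) H1 H2 H3 H4.
  exists (L ++ Z). split; [rewrite length_app; lia|].
  intros e He; apply in_app_iff.
  destruct (classic (In e Z)) as [HZ|HZ]; [auto|left; apply HLe].
  destruct He as [[Ha Hb]|[Ha Hb]].
  - destruct (H1 e Ha) as [H|[H|H]]; try tauto.
    left; split; [exact H | intros H'; destruct (H4 e H'); tauto].
  - destruct (H2 e Ha) as [H|[H|H]]; try tauto.
    right; split; [exact H | intros H'; destruct (H3 e H'); tauto].
Qed.

Lemma differ_by_le {A : Type} (l1 l2 : list A) (k k' : nat) :
  differ_by l1 l2 k -> (k <= k')%nat -> differ_by l1 l2 k'.
Proof. intros (L & H1 & H2) H; exists L; split; auto; lia. Qed.

Lemma recolored_by_slots (h1 h2 : nat) (t1 t2 : tree) (s1 s2 k : nat) :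
  balanced h1 t1 -> lex_sorted (elems t1) -> balanced h2 t2 -> lex_sorted (elems t2) ->
  differ_by (slots t1 s1) (slots t2 s2) k ->
  exists L : list square, (length L <= 2 * k)%nat /\
    forall p, In p (elems t1) -> In p (elems t2) -> tree_color t1 s1 p <> tree_color t2 s2 p ->
      In p L.
Proof.
  intros Hb1 Hs1 Hb2 Hs2 (D & Hlen & HD).
  exists (flat_map (fun e => [extreme true (fst e); extreme false (fst e)]) D). split.
  - rewrite (flat_map_constant_length (c := 2%nat)); [lia | reflexivity].
  - intros p Hp1 Hp2 Hne. apply NNPP; intros Hout. apply Hne.
    apply (tree_color_determined h1 h2 t1 t2 s1 s2 p); auto.
    intros T σ Hsp. split; intros H; apply NNPP; intros H'; apply Hout;
    apply in_flat_map; exists (T, σ); (split; [apply HD; tauto|]);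
    destruct Hsp as [-> | ->]; simpl; auto.
Qed.

(** * Insertion and deletion *)

Lemma subtrees_balanced (h : nat) (t : tree) :
  balanced (S h) t -> Forall (balanced h) (subtrees t) /\ (2 <= length (subtrees t) <= 3)%nat.
Proof. inversion 1; subst; simpl; split; auto; lia. Qed.

Lemma elems_subtrees (h : nat) (t : tree) :
  balanced (S h) t -> flat_map elems (subtrees t) = elems t.
Proof. inversion 1; subst; simpl; rewrite ?app_nil_r; reflexivity. Qed.

Lemma in_inner_split (t : tree) (e : tree * nat) :
  In e (inner t) <-> In e (children t) \/ In e (flat_map inner (subtrees t)).
Proof. destruct t; simpl; repeat (rewrite in_app_iff; simpl); tauto. Qed.

Lemma length_children (t : tree) : (length (children t) <= 3)%nat.
Proof. destruct t; simpl; lia. Qed.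

Lemma length_flat_map_children (ts : list tree) :
  (length (flat_map children ts) <= 3 * length ts)%nat.
Proof.
  induction ts as [|t ts IH]; simpl; rewrite ?length_app; [lia|].
  pose proof (length_children t); lia.
Qed.

Lemma length_indexed (ts : list tree) : length (indexed ts) = length ts.
Proof. unfold indexed; rewrite length_combine, length_seq; lia. Qed.

Definition node (ts : list tree) : list tree :=
  match ts with
  | [a; b] => [N2 a b]
  | [a; b; c] => [N3 a b c]
  | [a; b; c; d] => [N2 a b; N2 c d]
  | _ => ts
  end.

Ltac by_shape ts Hlen :=
  destruct ts as [|a [|b [|c [|d [|? ?]]]]]; simpl in Hlen; try lia; simpl.

Lemma node_balanced (h : nat) (ts : list tree) :
  Forall (balanced h) ts -> (2 <= length ts <= 4)%nat ->
  Forall (balanced (S h)) (node ts) /\ (1 <= length (node ts) <= 2)%nat.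
Proof.
  rewrite !Forall_forall. intros Hbal Hlen. by_shape ts Hlen; split; try lia;
  intros t Ht; repeat destruct Ht as [<-|Ht]; try contradiction;
  constructor; apply Hbal; simpl; auto.
Qed.

Lemma node_elems (ts : list tree) :
  (2 <= length ts <= 4)%nat -> flat_map elems (node ts) = flat_map elems ts.
Proof. intros Hlen; by_shape ts Hlen; rewrite ?app_nil_r, ?app_assoc; reflexivity. Qed.

Lemma length_node_children (ts : list tree) :
  (2 <= length ts <= 4)%nat -> length (flat_map children (node ts)) = length ts.
Proof. intros Hlen; by_shape ts Hlen; reflexivity. Qed.

Lemma node_inner (ts : list tree) (e : tree * nat) :
  (2 <= length ts <= 4)%nat ->
  In e (flat_map inner (node ts)) <->
  In e (flat_map children (node ts)) \/ In e (flat_map inner ts).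
Proof. intros Hlen; by_shape ts Hlen; repeat (rewrite in_app_iff; simpl); tauto. Qed.

Fixpoint least (t : tree) : square :=
  match t with
  | Lf p => p
  | N2 a _ | N3 a _ _ => least a
  end.

Lemma elems_least (t : tree) : exists l, elems t = least t :: l.
Proof.
  induction t as [p|a [l E] b _|a [l E] b _ c _]; simpl; [exists []; reflexivity | ..];
  rewrite E; eexists; reflexivity.
Qed.

Lemma least_in (t : tree) : In (least t) (elems t).
Proof. destruct (elems_least t) as [l ->]; left; reflexivity. Qed.

Lemma lt_least_all (t : tree) (x : square) :
  lex_lt x (least t) -> lex_sorted (elems t) -> forall y, In y (elems t) -> lex_lt x y.
Proof.
  destruct (elems_least t) as [l E]; rewrite E.
  intros Hx [_ Hl]%StronglySorted_inv y [<-|Hy]; auto.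
  rewrite Forall_forall in Hl; eauto using lex_lt_trans.
Qed.

Lemma not_lt_before_least (l : list square) (t : tree) (x : square) :
  (forall y z, In y l -> In z (elems t) -> lex_lt y z) -> ~ lex_lt x (least t) ->
  forall y, In y l -> ~ lex_lt x y.
Proof.
  intros Hlt Hx y Hy Hxy. apply Hx, lex_lt_trans with y; auto using least_in.
Qed.

Fixpoint insert (x : square) (t : tree) : list tree :=
  match t with
  | Lf p => if lex_lt_dec x p then [Lf x; Lf p] else [Lf p; Lf x]
  | N2 a b =>
      if lex_lt_dec x (least b) then node (insert x a ++ [b]) else node (a :: insert x b)
  | N3 a b c =>
      if lex_lt_dec x (least b) then node (insert x a ++ [b; c])
      else if lex_lt_dec x (least c) then node (a :: insert x b ++ [c])
      else node (a :: b :: insert x c)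
  end.

(* Per level, only the at most 3 + 4 slots of the children of the node on the path change. *)
Definition insert_spec (h : nat) (t : tree) (x : square) (ts : list tree) : Prop :=
  Forall (balanced h) ts /\ (1 <= length ts <= 2)%nat /\
  flat_map elems ts = insert_sorted x (elems t) /\
  differ_by (inner t) (flat_map inner ts) (7 * h).

Ltac unfold_members :=
  repeat progress (simpl in *; rewrite ?flat_map_app, ?in_app_iff in *).

Lemma insert_spec_node (h : nat) (t c : tree) (pre post ts : list tree) (x : square) :
  balanced (S h) t -> subtrees t = pre ++ c :: post ->
  (forall y, In y (flat_map elems pre) -> ~ lex_lt x y) ->
  (forall y, In y (flat_map elems post) -> lex_lt x y) ->
  insert_spec h c x ts -> insert_spec (S h) t x (node (pre ++ ts ++ post)).
Proof.
  intros Hb Hsub Hpre Hpost (Hbal & Hlen & Helems & Hdiff).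
  destruct (subtrees_balanced h t Hb) as [Hsb Hslen].
  rewrite Hsub, Forall_app in Hsb. destruct Hsb as [Hsb1 [_ Hsb2]%Forall_cons_iff].
  rewrite Hsub, length_app in Hslen; simpl in Hslen.
  assert (Hms : Forall (balanced h) (pre ++ ts ++ post) /\
                (2 <= length (pre ++ ts ++ post) <= 4)%nat)
    by (rewrite !Forall_app, !length_app; repeat split; auto; lia).
  destruct Hms as [Hmsb Hmsl].
  destruct (node_balanced h _ Hmsb Hmsl) as [Hnb Hnl].
  repeat split; auto; try lia.
  - rewrite node_elems, !flat_map_app, Helems, <- (elems_subtrees h t Hb), Hsub by auto.
    rewrite flat_map_app; simpl. rewrite insert_sorted_app, insert_sorted_app_r; auto.
  - eapply differ_by_le.
    + apply (differ_by_step _ _ _ _ (children t ++ flat_map children (node (pre ++ ts ++ post)))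
               _ Hdiff); intros e He;
      pose proof (in_inner_split t e) as Ht; pose proof (node_inner _ e Hmsl) as Hn;
      rewrite Hsub in Ht; unfold_members; tauto.
    + rewrite length_app, length_node_children, !length_app by auto.
      pose proof (length_children t). lia.
Qed.

Lemma insert_correct (h : nat) (t : tree) (x : square) :
  balanced h t -> lex_sorted (elems t) -> insert_spec h t x (insert x t).
Proof.
  revert t; induction h as [|h IH]; intros t Hb Hs.
  - inversion Hb; subst; simpl.
    destruct lex_lt_dec; repeat split; repeat constructor; simpl; try lia;
      try (exists []; simpl; split; [lia | tauto]).
    all: destruct lex_lt_dec; tauto.
  - inversion Hb as [|? a b Ha Hb'|? a b c Ha Hb' Hc]; subst; cbn [insert];
    simpl in Hs; repeat rewrite StronglySorted_app_iff in Hs; decompose [and] Hs.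
    + destruct lex_lt_dec.
      * apply (insert_spec_node h _ a [] [b]); simpl; auto.
        intros y Hy. rewrite app_nil_r in Hy. eauto using lt_least_all.
      * rewrite <- (app_nil_r (insert x b)).
        apply (insert_spec_node h _ b [a] []); simpl; auto; [|tauto].
        rewrite app_nil_r. eauto using not_lt_before_least.
    + destruct lex_lt_dec; [|destruct lex_lt_dec].
      * apply (insert_spec_node h _ a [] [b; c]); simpl; auto.
        intros y Hy. rewrite app_nil_r, in_app_iff in Hy.
        destruct Hy as [Hy|Hy]; eauto using lt_least_all, lex_lt_trans, least_in.
      * apply (insert_spec_node h _ b [a] [c]); simpl; auto.
        -- rewrite app_nil_r. eauto using not_lt_before_least, in_or_app.
        -- rewrite app_nil_r. eauto using lt_least_all.
      * rewrite <- (app_nil_r (insert x c)).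
        apply (insert_spec_node h _ c [a; b] []); simpl; auto; [|tauto].
        rewrite app_nil_r. apply (not_lt_before_least _ c); auto.
        intros y z [Hy|Hy]%in_app_or Hz; eauto using in_or_app.
Qed.

Inductive delete_result : Type :=
| Emptied
| Kept (t : tree)
| Shrunk (t : tree).

Definition result_trees (r : delete_result) : list tree :=
  match r with
  | Emptied => []
  | Kept t | Shrunk t => [t]
  end.

(* A child that lost a level is merged into an adjacent sibling. *)
Definition absorb (pre : list tree) (r : delete_result) (post : list tree) : list tree :=
  match r, post with
  | Emptied, _ => pre ++ post
  | Kept c, _ => pre ++ c :: post
  | Shrunk c, s :: post' => pre ++ node (c :: subtrees s) ++ post'
  | Shrunk c, [] => removelast pre ++ node (subtrees (last pre c) ++ [c])
  end.

Definition rebuild (ts : list tree) : delete_result :=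
  match ts with
  | [t] => Shrunk t
  | [a; b] => Kept (N2 a b)
  | [a; b; c] => Kept (N3 a b c)
  | _ => Emptied
  end.

Fixpoint delete (x : square) (t : tree) : delete_result :=
  match t with
  | Lf _ => Emptied
  | N2 a b =>
      if in_dec square_eq_dec x (elems a) then rebuild (absorb [] (delete x a) [b])
      else rebuild (absorb [a] (delete x b) [])
  | N3 a b c =>
      if in_dec square_eq_dec x (elems a) then rebuild (absorb [] (delete x a) [b; c])
      else if in_dec square_eq_dec x (elems b) then rebuild (absorb [a] (delete x b) [c])
      else rebuild (absorb [a; b] (delete x c) [])
  end.

(* Per level, only the slots of the children and grandchildren of the node on the path
   change: at most 9 before and 12 after. *)
Definition delete_spec (h : nat) (t : tree) (x : square) (r : delete_result) : Prop :=
  match r with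
  | Emptied => t = Lf x
  | Kept t' => balanced h t'
  | Shrunk t' => exists h', h = S h' /\ balanced h' t'
  end /\
  flat_map elems (result_trees r) = remove square_eq_dec x (elems t) /\
  differ_by (inner t) (flat_map inner (result_trees r)) (21 * h).

Definition regroups (h : nat) (pre rs post cs : list tree) : Prop :=
  Forall (balanced h) cs /\ (1 <= length cs <= 3)%nat /\
  flat_map elems cs = flat_map elems (pre ++ rs ++ post) /\
  (forall e, In e (flat_map inner cs) ->
     In e (flat_map inner (pre ++ rs ++ post)) \/ In e (flat_map children cs)) /\
  (forall e, In e (flat_map inner (pre ++ rs ++ post)) ->
     In e (flat_map inner cs) \/ In e (flat_map children (pre ++ post))).

Lemma regroups_splice (h : nat) (pre rs post : list tree) :
  Forall (balanced h) (pre ++ rs ++ post) -> (1 <= length (pre ++ rs ++ post) <= 3)%nat ->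
  regroups h pre rs post (pre ++ rs ++ post).
Proof. intros Hb Hl; repeat split; auto; lia || (intros e He; left; exact He). Qed.

Lemma regroups_merge_right (h : nat) (pre : list tree) (c s : tree) (post : list tree) :
  Forall (balanced (S h)) (pre ++ s :: post) -> balanced h c ->
  (length (pre ++ s :: post) <= 2)%nat ->
  regroups (S h) pre [c] (s :: post) (pre ++ node (c :: subtrees s) ++ post).
Proof.
  intros Hb Hc Hl.
  rewrite Forall_app in Hb. destruct Hb as [Hpre [Hs Hpost]%Forall_cons_iff].
  destruct (subtrees_balanced h s Hs) as [Hsb Hsl].
  assert (Hm : (2 <= length (c :: subtrees s) <= 4)%nat) by (simpl; lia).
  destruct (node_balanced h (c :: subtrees s)) as [Hnb Hnl]; auto.
  rewrite length_app in Hl; simpl in Hl.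
  repeat split.
  - rewrite !Forall_app; auto.
  - rewrite !length_app; lia.
  - rewrite !length_app; lia.
  - rewrite !flat_map_app, node_elems by auto. simpl.
    rewrite <- (elems_subtrees h s Hs), app_nil_r, !app_assoc; reflexivity.
  - intros e He; pose proof (node_inner _ e Hm); pose proof (in_inner_split s e).
    unfold_members; tauto.
  - intros e He; pose proof (node_inner _ e Hm); pose proof (in_inner_split s e).
    unfold_members; tauto.
Qed.

Lemma regroups_merge_left (h : nat) (pre : list tree) (l c : tree) :
  Forall (balanced (S h)) (pre ++ [l]) -> balanced h c -> (length (pre ++ [l]) <= 2)%nat ->
  regroups (S h) (pre ++ [l]) [c] [] (pre ++ node (subtrees l ++ [c])).
Proof.
  intros Hb Hc Hl.
  rewrite Forall_app in Hb. destruct Hb as [Hpre [Hs _]%Forall_cons_iff].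
  destruct (subtrees_balanced h l Hs) as [Hsb Hsl].
  assert (Hm : (2 <= length (subtrees l ++ [c]) <= 4)%nat) by (rewrite length_app; simpl; lia).
  destruct (node_balanced h (subtrees l ++ [c])) as [Hnb Hnl];
    [rewrite Forall_app; auto | auto |].
  rewrite length_app in Hl; simpl in Hl.
  repeat split.
  - rewrite !Forall_app; auto.
  - rewrite !length_app; lia.
  - rewrite !length_app; lia.
  - rewrite !flat_map_app, node_elems, flat_map_app by auto. simpl.
    rewrite <- (elems_subtrees h l Hs), !app_nil_r, !app_assoc; reflexivity.
  - intros e He; pose proof (node_inner _ e Hm); pose proof (in_inner_split l e).
    unfold_members; tauto.
  - intros e He; pose proof (node_inner _ e Hm); pose proof (in_inner_split l e).
    unfold_members; tauto.
Qed.

Lemma absorb_regroups (h : nat) (pre post : list tree) (c : tree) (x : square)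
    (r : delete_result) :
  Forall (balanced h) (pre ++ post) -> (1 <= length (pre ++ post) <= 2)%nat ->
  delete_spec h c x r -> regroups h pre (result_trees r) post (absorb pre r post).
Proof.
  intros Hb Hl (Hr & _ & _); destruct r as [|c'|c']; simpl in Hr |- *.
  - apply regroups_splice; simpl; [auto | lia].
  - apply regroups_splice.
    + rewrite Forall_app in *; simpl; intuition.
    + rewrite !length_app in *; simpl; lia.
  - destruct Hr as (h' & -> & Hc').
    destruct post as [|s post].
    + rewrite app_nil_r in Hb, Hl.
      assert (Hne : pre <> []) by (intros ->; simpl in Hl; lia).
      pose proof (app_removelast_last c' Hne) as Hpre.
      rewrite Hpre in Hb, Hl.
      pose proof (regroups_merge_left h' (removelast pre) (last pre c') c' Hb Hc'
                    ltac:(lia)) as Hm.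
      rewrite <- Hpre in Hm. exact Hm.
    + apply regroups_merge_right; auto. lia.
Qed.

Lemma rebuild_spec (h : nat) (cs : list tree) :
  Forall (balanced h) cs -> (1 <= length cs <= 3)%nat ->
  match rebuild cs with
  | Emptied => False
  | Kept t => balanced (S h) t
  | Shrunk t => balanced h t
  end /\
  flat_map elems (result_trees (rebuild cs)) = flat_map elems cs /\
  (forall e, In e (flat_map inner (result_trees (rebuild cs))) ->
     In e (indexed cs) \/ In e (flat_map inner cs)) /\
  (forall e, In e (flat_map inner cs) -> In e (flat_map inner (result_trees (rebuild cs)))).
Proof.
  rewrite Forall_forall. intros Hb Hl.
  destruct cs as [|a [|b [|c [|? ?]]]]; simpl in Hl |- *; try lia;
  repeat split; try (constructor; apply Hb; simpl; auto); try (apply Hb; simpl; auto);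
  rewrite ?app_nil_r, ?app_assoc; auto;
  intros e He; unfold_members; tauto.
Qed.

Lemma sorted_siblings_notin (pre post : list tree) (c : tree) (x : square) :
  lex_sorted (flat_map elems (pre ++ c :: post)) -> In x (elems c) ->
  ~ In x (flat_map elems pre) /\ ~ In x (flat_map elems post).
Proof.
  rewrite flat_map_app; simpl. intros Hs Hx. split.
  - intros Hpre. eapply lex_sorted_app_disjoint; eauto using in_or_app.
  - apply StronglySorted_app_iff in Hs as (_ & Hs & _).
    intros Hpost. eapply lex_sorted_app_disjoint; eauto.
Qed.

Lemma delete_spec_node (h : nat) (t c : tree) (pre post : list tree) (x : square)
    (r : delete_result) :
  balanced (S h) t -> lex_sorted (elems t) -> subtrees t = pre ++ c :: post ->
  In x (elems c) -> delete_spec h c x r -> delete_spec (S h) t x (rebuild (absorb pre r post)).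
Proof.
  intros Hb Hs Hsub Hx Hr.
  destruct (subtrees_balanced h t Hb) as [Hsb Hslen].
  rewrite Hsub, Forall_app in Hsb. destruct Hsb as [Hsb1 [_ Hsb2]%Forall_cons_iff].
  rewrite Hsub, length_app in Hslen; simpl in Hslen.
  set (cs := absorb pre r post).
  destruct (absorb_regroups h pre post c x r) as (Hcb & Hcl & Hce & Hin1 & Hin2); auto.
  { rewrite Forall_app; auto. }
  { rewrite length_app; lia. }
  fold cs in Hcb, Hcl, Hce, Hin1, Hin2.
  destruct (rebuild_spec h cs Hcb Hcl) as (Hbal & Hre & Hout & Hin).
  destruct Hr as (_ & Hrel & Hdiff).
  rewrite <- (elems_subtrees h t Hb), Hsub in Hs.
  destruct (sorted_siblings_notin pre post c x Hs Hx) as [Hnpre Hnpost].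
  split; [|split].
  - destruct (rebuild cs); [contradiction | exact Hbal | eauto].
  - rewrite Hre, Hce, <- (elems_subtrees h t Hb), Hsub, !flat_map_app, Hrel. simpl.
    rewrite remove_app, remove_app, (notin_remove _ _ _ Hnpre), (notin_remove _ _ _ Hnpost).
    reflexivity.
  - eapply differ_by_le.
    + apply (differ_by_step _ _ _ _
               (children t ++ flat_map children (pre ++ post) ++
                indexed cs ++ flat_map children cs)
               _ Hdiff); intros e He;
      pose proof (in_inner_split t e) as Ht; rewrite Hsub in Ht;
      pose proof (Hin1 e); pose proof (Hin2 e); pose proof (Hout e); pose proof (Hin e);
      unfold_members; tauto.
    + pose proof (length_children t); pose proof (length_flat_map_children (pre ++ post));
      pose proof (length_flat_map_children cs); rewrite !length_app, length_indexed in *.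
      lia.
Qed.

Lemma delete_correct (h : nat) (t : tree) (x : square) :
  balanced h t -> lex_sorted (elems t) -> In x (elems t) -> delete_spec h t x (delete x t).
Proof.
  revert t; induction h as [|h IH]; intros t Hb Hs Hx.
  - inversion Hb; subst. destruct Hx as [->|[]].
    split; [reflexivity | split].
    + simpl. destruct (square_eq_dec x x); congruence.
    + exists []; simpl; split; [lia | tauto].
  - inversion Hb as [|? a b Ha Hb'|? a b c Ha Hb' Hc]; subst; cbn [delete];
    simpl in Hs, Hx; pose proof Hs as Hs';
    repeat rewrite StronglySorted_app_iff in Hs'; decompose [and] Hs';
    repeat rewrite in_app_iff in Hx;
    repeat (destruct in_dec); try (exfalso; tauto);
    [ eapply (delete_spec_node h _ a [] [b])
    | eapply (delete_spec_node h _ b [a] [])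
    | eapply (delete_spec_node h _ a [] [b; c])
    | eapply (delete_spec_node h _ b [a] [c])
    | eapply (delete_spec_node h _ c [a; b] []) ];
    simpl; auto; try tauto; apply IH; auto; tauto.
Qed.

(** * Grid cells *)

(* A square is filed under the cell [I-1, I) x [J-1, J) containing its corner, since
   [up a] is the integer with [up a - 1 <= a < up a]. *)
Definition cell (s : square) : Z * Z := (up (fst s), up (snd s)).

Lemma up_bounds (a : R) : IZR (up a) - 1 <= a < IZR (up a).
Proof. destruct (archimed a); lra. Qed.

(* For corners in cell [g], those of the squares containing [q] form a set that is monotone
   in the lexicographic order, cut by a horizontal halfplane. *)
Definition x_range (g : Z * Z) (q : R * R) (p : square) : Prop :=
  if Rle_dec (IZR (fst g)) (fst q) then fst q - 1 <= fst p else fst p <= fst q.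

Definition y_up (g : Z * Z) (q : R * R) : bool :=
  if Rle_dec (IZR (snd g)) (snd q) then true else false.

Definition y_bound (g : Z * Z) (q : R * R) : R :=
  if Rle_dec (IZR (snd g)) (snd q) then snd q - 1 else snd q.

Lemma in_square_iff_cell (s : square) (q : R * R) :
  in_square s q <->
  x_range (cell s) q s /\ in_halfline (y_up (cell s) q) (y_bound (cell s) q) s.
Proof.
  destruct s as [a b], q as [x y].
  unfold in_square, x_range, y_up, y_bound, in_halfline, cell; simpl.
  destruct (up_bounds a), (up_bounds b).
  destruct (Rle_dec (IZR (up a)) x), (Rle_dec (IZR (up b)) y); split; intros; lra.
Qed.

Lemma x_range_monotone (g : Z * Z) (q : R * R) : monotone_set (x_range g q).
Proof.
  unfold monotone_set, x_range, lex_lt.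
  destruct Rle_dec; [left|right]; intros p p' [H|[H _]] H'; lra.
Qed.

Definition parity_class (g : Z * Z) : nat :=
  ((if Z.even (fst g) then 0 else 1) + 2 * (if Z.even (snd g) then 0 else 1))%nat.

Lemma parity_class_lt (g : Z * Z) : (parity_class g < 4)%nat.
Proof. unfold parity_class; destruct (Z.even (fst g)), (Z.even (snd g)); simpl; lia. Qed.

Lemma near_integers_eq (I I' : Z) (x : R) :
  IZR I - 1 <= x < IZR I + 1 -> IZR I' - 1 <= x < IZR I' + 1 ->
  Z.even I = Z.even I' -> I = I'.
Proof.
  intros H1 H2 E.
  assert (I < I' + 2)%Z by (apply lt_IZR; rewrite plus_IZR; simpl; lra).
  assert (I' < I + 2)%Z by (apply lt_IZR; rewrite plus_IZR; simpl; lra).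
  assert (HI : (I = I' - 1 \/ I = I' \/ I = I' + 1)%Z) by lia.
  destruct HI as [-> | [-> | ->]]; auto;
  rewrite ?Z.even_sub, ?Z.even_add in E; simpl in E;
  destruct (Z.even I'); discriminate.
Qed.

Lemma same_class_same_cell (s s' : square) (q : R * R) :
  in_square s q -> in_square s' q -> parity_class (cell s) = parity_class (cell s') ->
  cell s = cell s'.
Proof.
  destruct s as [a b], s' as [a' b'], q as [x y].
  unfold in_square, parity_class, cell; simpl. intros H1 H2 Hc.
  destruct (up_bounds a), (up_bounds b), (up_bounds a'), (up_bounds b').
  assert (Ex : Z.even (up a) = Z.even (up a')) by
    (destruct (Z.even (up a)), (Z.even (up a')), (Z.even (up b)), (Z.even (up b'));
     simpl in Hc; lia).
  assert (Ey : Z.even (up b) = Z.even (up b')) by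
    (destruct (Z.even (up a)), (Z.even (up a')), (Z.even (up b)), (Z.even (up b'));
     simpl in Hc; lia).
  f_equal; [apply (near_integers_eq _ _ x) | apply (near_integers_eq _ _ y)]; auto; lra.
Qed.

Definition encode (k : nat) (c : color) : nat :=
  (k + 4 * (slot c + 4 * (Nat.b2n (snd (fst c)) + 2 * level c)))%nat.

Lemma encode_inj (k k' : nat) (c c' : color) :
  (k < 4)%nat -> (k' < 4)%nat -> (slot c <= 3)%nat -> (slot c' <= 3)%nat ->
  encode k c = encode k' c' -> k = k' /\ c = c'.
Proof.
  destruct c as [[l b] s], c' as [[l' b'] s']; unfold encode, level, slot; simpl.
  intros H1 H2 H3 H4 E.
  assert (k = k') by lia. assert (s = s') by lia.
  assert (Nat.b2n b = Nat.b2n b') by (destruct b, b'; simpl in *; lia).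
  assert (l = l') by (destruct b, b'; simpl in *; lia).
  destruct b, b'; simpl in *; try lia; subst; auto.
Qed.

Lemma encode_lt (k : nat) (c : color) :
  (k < 4)%nat -> (slot c <= 3)%nat -> (encode k c < 32 * (level c + 1))%nat.
Proof. destruct c as [[l b] s]; unfold encode, level, slot; simpl; destruct b; simpl; lia. Qed.

(** * The dynamic colouring *)

Definition root_of (ts : list tree) : option tree :=
  match ts with
  | [t] => Some t
  | [a; b] => Some (N2 a b)
  | _ => None
  end.

Definition root_elems (o : option tree) : list square :=
  match o with None => [] | Some t => elems t end.

Definition root_slots (o : option tree) : list (tree * nat) :=
  match o with None => [] | Some t => slots t 3 end.

Definition well_formed (o : option tree) : Prop :=
  match o with None => True | Some t => exists h, balanced h t /\ lex_sorted (elems t) end.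

Lemma root_of_correct (h : nat) (ts : list tree) :
  Forall (balanced h) ts -> (length ts <= 2)%nat ->
  (forall t, root_of ts = Some t -> exists h', balanced h' t) /\
  root_elems (root_of ts) = flat_map elems ts.
Proof.
  rewrite Forall_forall. intros Hb Hl.
  destruct ts as [|a [|b [|? ?]]]; simpl in Hl |- *; try lia;
  rewrite ?app_nil_r; split; auto; intros t E; inversion E; subst;
  eexists; repeat constructor; apply Hb; simpl; auto.
Qed.

Lemma root_of_differ (t : tree) (ts : list tree) (k : nat) :
  (length ts <= 2)%nat -> differ_by (inner t) (flat_map inner ts) k ->
  differ_by (slots t 3) (root_slots (root_of ts)) (k + 5).
Proof.
  intros Hl Hd.
  set (top := match root_of ts with None => [] | Some r => (r, 3%nat) :: children r end).
  eapply differ_by_le.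
  - apply (differ_by_step _ _ _ _ ((t, 3%nat) :: top) _ Hd); unfold top, slots;
    destruct ts as [|a [|b [|? ?]]]; simpl in Hl |- *; try lia;
    intros e He; unfold_members; tauto.
  - unfold top. destruct (root_of ts) as [r|]; simpl; [pose proof (length_children r)|]; lia.
Qed.

Definition cell_insert (x : square) (o : option tree) : option tree :=
  match o with None => Some (Lf x) | Some t => root_of (insert x t) end.

Definition cell_delete (x : square) (o : option tree) : option tree :=
  match o with None => None | Some t => root_of (result_trees (delete x t)) end.

Lemma cell_insert_correct (x : square) (o : option tree) :
  well_formed o -> ~ In x (root_elems o) ->
  well_formed (cell_insert x o) /\
  forall z, In z (root_elems (cell_insert x o)) <-> z = x \/ In z (root_elems o).
Proof.
  destruct o as [t|]; simpl; intros Hw Hx.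
  - destruct Hw as (h & Hb & Hs).
    destruct (insert_correct h t x Hb Hs) as (Hib & Hil & Hie & _).
    destruct (root_of_correct h (insert x t) Hib ltac:(lia)) as [Hrb Hre].
    split.
    + destruct (root_of (insert x t)) as [r|] eqn:E; simpl; auto.
      destruct (Hrb r eq_refl) as [h' Hr]. exists h'. split; auto.
      simpl in Hre. rewrite Hre, Hie. apply insert_sorted_sorted; auto.
    + intros z. rewrite Hre, Hie. apply in_insert_sorted.
  - split; [exists 0%nat; split; repeat constructor | simpl; intuition congruence].
Qed.

Lemma cell_insert_differ (x : square) (o : option tree) (m : nat) :
  well_formed o -> (forall t h, o = Some t -> balanced h t -> (h <= m)%nat) ->
  differ_by (root_slots o) (root_slots (cell_insert x o)) (7 * m + 5).
Proof.
  destruct o as [t|]; simpl; intros Hw Hm.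
  - destruct Hw as (h & Hb & Hs).
    destruct (insert_correct h t x Hb Hs) as (_ & Hil & _ & Hd).
    eapply differ_by_le; [apply root_of_differ; eauto; lia|].
    specialize (Hm t h eq_refl Hb). lia.
  - exists [(Lf x, 3%nat)]. split; [simpl; lia|]. intros e [[[]]|[H _]]; auto.
Qed.

Lemma cell_delete_correct (x : square) (o : option tree) :
  well_formed o -> In x (root_elems o) ->
  well_formed (cell_delete x o) /\
  forall z, In z (root_elems (cell_delete x o)) <-> z <> x /\ In z (root_elems o).
Proof.
  destruct o as [t|]; simpl; intros Hw Hx; [|contradiction].
  destruct Hw as (h & Hb & Hs).
  destruct (delete_correct h t x Hb Hs Hx) as (Hr & Hde & _).
  assert (Hin : forall z, In z (flat_map elems (result_trees (delete x t))) <->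
                          z <> x /\ In z (elems t)).
  { intros z. rewrite Hde. split.
    - intros [? ?]%in_remove; auto.
    - intros [? ?]; apply in_in_remove; auto. }
  assert (Hsorted : lex_sorted (flat_map elems (result_trees (delete x t))))
    by (rewrite Hde, <- remove_alt; apply StronglySorted_filter; auto).
  destruct (delete x t) as [|t'|t']; simpl in *; rewrite ?app_nil_r in *; split; auto.
  - exists h; auto.
  - destruct Hr as (h' & _ & Hr); exists h'; auto.
Qed.

Lemma cell_delete_differ (x : square) (o : option tree) (m : nat) :
  well_formed o -> In x (root_elems o) ->
  (forall t h, o = Some t -> balanced h t -> (h <= m)%nat) ->
  differ_by (root_slots o) (root_slots (cell_delete x o)) (21 * m + 5).
Proof.
  destruct o as [t|]; simpl; intros Hw Hx Hm; [|contradiction].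
  destruct Hw as (h & Hb & Hs).
  destruct (delete_correct h t x Hb Hs Hx) as (_ & _ & Hd).
  eapply differ_by_le; [apply root_of_differ; eauto; destruct (delete x t); simpl; lia|].
  specialize (Hm t h eq_refl Hb). lia.
Qed.

Definition forest := Z * Z -> option tree.

Definition cell_eq_dec (g g' : Z * Z) : {g = g'} + {g <> g'}.
Proof. decide equality; apply Z.eq_dec. Defined.

Definition set_cell (F : forest) (g : Z * Z) (o : option tree) : forest :=
  fun g' => if cell_eq_dec g' g then o else F g'.

Definition apply_update (u : update) (F : forest) : forest :=
  match u with
  | Ins s => set_cell F (cell s) (cell_insert s (F (cell s)))
  | Del s => set_cell F (cell s) (cell_delete s (F (cell s)))
  end.

Definition forest_of (h : list update) : forest := fold_right apply_update (fun _ => None) h.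

Definition cell_color (o : option tree) (s : square) : color :=
  match o with None => (0%nat, true, 0%nat) | Some t => tree_color t 3 s end.

Definition coloring (F : forest) (s : square) : nat :=
  encode (parity_class (cell s)) (cell_color (F (cell s)) s).

Definition represents (S : square -> Prop) (F : forest) : Prop :=
  (forall g, well_formed (F g)) /\ (forall s g, In s (root_elems (F g)) <-> S s /\ cell s = g).

Lemma represents_set_cell (S S' : square -> Prop) (F : forest) (g : Z * Z) (o : option tree) :
  represents S F -> well_formed o ->
  (forall s, In s (root_elems o) <-> S' s /\ cell s = g) ->
  (forall s, cell s <> g -> S' s <-> S s) ->
  represents S' (set_cell F g o).
Proof.
  intros [Hw Hm] Hwo Ho Hout. unfold set_cell. split.
  - intros g'; destruct cell_eq_dec; auto.
  - intros s g'; destruct cell_eq_dec as [->|Hne]; auto.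
    rewrite Hm. split; intros [Hs <-]; split; auto; apply Hout; auto.
Qed.

Lemma forest_of_represents (h : list update) : valid h -> represents (present h) (forest_of h).
Proof.
  induction h as [|[s|s] h IH]; intros Hv.
  - split; [simpl; auto | simpl; tauto].
  - destruct Hv as [Hv Hn]. destruct (IH Hv) as [Hw Hm].
    destruct (cell_insert_correct s (forest_of h (cell s))) as [Hw' Hm']; auto.
    { rewrite Hm; tauto. }
    apply (represents_set_cell _ _ _ _ _ (IH Hv) Hw').
    + intros z. rewrite Hm', Hm. simpl. intuition congruence.
    + intros z Hz. simpl. intuition congruence.
  - destruct Hv as [Hv Hp]. destruct (IH Hv) as [Hw Hm].
    destruct (cell_delete_correct s (forest_of h (cell s))) as [Hw' Hm']; auto.
    { apply Hm; auto. }
    apply (represents_set_cell _ _ _ _ _ (IH Hv) Hw').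
    + intros z. rewrite Hm', Hm. simpl. intuition congruence.
    + intros z Hz. simpl. intuition congruence.
Qed.

Lemma represented_tree (S : square -> Prop) (F : forest) (s : square) :
  represents S F -> S s ->
  exists t h, F (cell s) = Some t /\ balanced h t /\ lex_sorted (elems t) /\ In s (elems t).
Proof.
  intros [Hw Hm] Hs. assert (Hin : In s (root_elems (F (cell s)))) by (apply Hm; auto).
  specialize (Hw (cell s)). destruct (F (cell s)) as [t|]; simpl in *; [|contradiction].
  destruct Hw as (h & Hb & Hsort). exists t, h; auto.
Qed.

Lemma present_list (h : list update) :
  valid h -> exists L, NoDup L /\ length L = cur_size h /\ forall s, present h s <-> In s L.
Proof.
  induction h as [|[s|s] h IH]; simpl; intros Hv.
  - exists []; repeat split; [constructor | tauto | tauto].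
  - destruct Hv as [Hv Hn]. destruct (IH Hv) as (L & ND & Hl & HL).
    exists (s :: L). split; [constructor; auto; rewrite <- HL; auto|]. split; [simpl; auto|].
    intros z; simpl; rewrite HL; intuition congruence.
  - destruct Hv as [Hv Hp]. destruct (IH Hv) as (L & ND & Hl & HL).
    apply HL in Hp. destruct (in_split _ _ Hp) as (l1 & l2 & ->).
    pose proof (NoDup_remove _ _ _ ND) as [ND' Hn].
    exists (l1 ++ l2). split; auto. split.
    + rewrite length_app in *; simpl in Hl; lia.
    + intros z; rewrite HL, !in_app_iff; simpl. split.
      * intros [Hne [H|[H|H]]]; auto; congruence.
      * intros H; split; [intros ->; apply Hn, in_app_iff; auto | tauto].
Qed.

Lemma height_le_log2 (h : list update) (F : forest) (g : Z * Z) (t : tree) (hh : nat) :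
  valid h -> represents (present h) F -> F g = Some t -> balanced hh t ->
  (hh <= Nat.log2 (cur_size h))%nat.
Proof.
  intros Hv [Hw Hm] E Hb.
  destruct (present_list h Hv) as (L & ND & Hl & HL).
  assert (Hs : lex_sorted (elems t)) by (specialize (Hw g); rewrite E in Hw; firstorder).
  assert (Hincl : incl (elems t) L) by (intros z Hz; apply HL, (Hm z g); rewrite E; auto).
  pose proof (NoDup_incl_length (StronglySorted_NoDup _ _ _ lex_lt_irrefl Hs) Hincl).
  rewrite <- (Nat.log2_pow2 hh) by lia. apply Nat.log2_le_mono.
  eapply Nat.le_trans; [apply balanced_size; eauto | lia].
Qed.

Lemma cell_color_slot_le (o : option tree) (s : square) :
  well_formed o -> (slot (cell_color o s) <= 3)%nat.
Proof.
  destruct o as [t|]; simpl; [|cbn; lia].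
  intros (h & Hb & _). apply (tree_color_bounds h t 3 s Hb). lia.
Qed.

Lemma represents_conflict_free (S : square -> Prop) (F : forest) :
  represents S F -> conflict_free S (coloring F).
Proof.
  intros Hrep q (s0 & Hs0 & Hq0).
  destruct (represented_tree S F s0 Hrep Hs0) as (t & h & E & Hb & Hsort & Hin0).
  destruct Hrep as [Hw Hm].
  set (g0 := cell s0) in *.
  destruct (tree_conflict_free h t 3 (x_range g0 q) (y_up g0 q) (y_bound g0 q))
    as (p & Hp & [Up Yp] & Huniq); auto using x_range_monotone.
  { exists s0. split; [exact Hin0 | apply in_square_iff_cell; auto]. }
  assert (Hpg : S p /\ cell p = g0) by (apply Hm; rewrite E; exact Hp).
  destruct Hpg as [Sp Cp].
  exists p. split; [auto|]. split; [apply in_square_iff_cell; rewrite Cp; auto|].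
  intros s' Ss' Hq' Hne Hc. unfold coloring in Hc.
  apply encode_inj in Hc as [Hcls Hcol];
    auto using parity_class_lt, cell_color_slot_le.
  assert (Cs' : cell s' = g0)
    by (rewrite <- Cp; apply (same_class_same_cell s' p q); auto;
        apply in_square_iff_cell; rewrite Cp; auto).
  rewrite Cs', Cp, E in Hcol. simpl in Hcol.
  apply in_square_iff_cell in Hq'. rewrite Cs' in Hq'.
  apply (Huniq s'); auto.
  assert (Hs' : In s' (root_elems (F g0))) by (apply Hm; auto).
  rewrite E in Hs'. exact Hs'.
Qed.

Lemma coloring_uses_at_most (S : square -> Prop) (F : forest) (m : nat) :
  represents S F -> (forall g t h, F g = Some t -> balanced h t -> (h <= m)%nat) ->
  uses_at_most S (coloring F) (32 * (m + 1)).
Proof.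
  intros Hrep Hm. exists (seq 0 (32 * (m + 1))). split; [rewrite length_seq; lia|].
  intros s Hs. apply in_seq.
  destruct (represented_tree S F s Hrep Hs) as (t & h & E & Hb & _).
  unfold coloring. rewrite E. simpl.
  destruct (tree_color_bounds h t 3 s Hb) as [Hl Hsl]; [lia|].
  pose proof (encode_lt (parity_class (cell s)) (tree_color t 3 s) (parity_class_lt _) Hsl).
  specialize (Hm _ _ _ E Hb). nia.
Qed.

Lemma recolored_by_root_slots (o o' : option tree) (k : nat) :
  well_formed o -> well_formed o' -> differ_by (root_slots o) (root_slots o') k ->
  exists L : list square, (length L <= 2 * k)%nat /\
    forall p, In p (root_elems o) -> In p (root_elems o') ->
      cell_color o p <> cell_color o' p -> In p L.
Proof.
  destruct o as [t|], o' as [t'|]; simpl;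
  try (intros; exists []; split; [simpl; lia | contradiction]).
  intros (h & Hb & Hs) (h' & Hb' & Hs'). apply recolored_by_slots with h h'; auto.
Qed.

Lemma recolorings_one_cell (S S' : square -> Prop) (F F' : forest) (g0 : Z * Z) (k : nat) :
  represents S F -> represents S' F' -> (forall g, g <> g0 -> F' g = F g) ->
  differ_by (root_slots (F g0)) (root_slots (F' g0)) k ->
  recolorings_at_most S S' (coloring F) (coloring F') (2 * k).
Proof.
  intros [Hw Hm] [Hw' Hm'] Hsame Hd.
  destruct (recolored_by_root_slots _ _ k (Hw g0) (Hw' g0) Hd) as (L & HL & Hcov).
  exists L; split; auto. intros s Hs Hs' Hne.
  destruct (cell_eq_dec (cell s) g0) as [<-|Eg].
  - apply Hcov; [apply Hm | apply Hm' | ]; auto.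
    intros Hc; apply Hne; unfold coloring; rewrite Hc; reflexivity.
  - exfalso; apply Hne; unfold coloring; rewrite (Hsame _ Eg); reflexivity.
Qed.

Lemma update_recolorings (h : list update) (u : update) :
  valid h -> valid (u :: h) ->
  recolorings_at_most (present h) (present (u :: h))
    (coloring (forest_of h)) (coloring (forest_of (u :: h)))
    (2 * (21 * Nat.log2 (cur_size h) + 5)).
Proof.
  intros Hv Hv'.
  pose proof (forest_of_represents h Hv) as Hrep. pose proof Hrep as [Hw Hin].
  assert (Hm : forall g t hh, forest_of h g = Some t -> balanced hh t ->
                 (hh <= Nat.log2 (cur_size h))%nat)
    by eauto using height_le_log2.
  destruct u as [s|s];
    apply (recolorings_one_cell _ _ _ _ (cell s)); auto using forest_of_represents;
    cbn [forest_of fold_right apply_update]; unfold set_cell.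
  - intros g Hg; destruct cell_eq_dec; [contradiction | reflexivity].
  - destruct cell_eq_dec; [|congruence].
    eapply differ_by_le; [apply (cell_insert_differ s _ (Nat.log2 (cur_size h))); eauto | lia].
  - intros g Hg; destruct cell_eq_dec; [contradiction | reflexivity].
  - destruct cell_eq_dec; [|congruence].
    apply (cell_delete_differ s _ (Nat.log2 (cur_size h))); eauto.
    apply Hin. split; [apply Hv' | reflexivity].
Qed.

Lemma log2_cur_size_step (h : list update) (u : update) :
  (Nat.log2 (cur_size h) <= S (Nat.log2 (cur_size (u :: h))))%nat.
Proof.
  destruct u; simpl.
  - pose proof (Nat.log2_le_mono (cur_size h) (S (cur_size h))). lia.
  - destruct (cur_size h) as [|n]; simpl; [lia | apply Nat.log2_succ_le].
Qed.

Theorem mainTheorem4 :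
  exists (c : nat) (col : list update -> square -> nat),
    forall h : list update, valid h ->
      conflict_free (present h) (col h) /\
      uses_at_most (present h) (col h) (logbound c (cur_size h)) /\
      (forall u : update, valid (u :: h) ->
         recolorings_at_most (present h) (present (u :: h))
           (col h) (col (u :: h)) (logbound c (cur_size (u :: h)))).
Proof.
  (* 52 bounds both 32 (m + 1) colours and 2 (21 m + 5) recolourings, m a tree height. *)
  exists 52%nat, (fun h => coloring (forest_of h)). intros h Hv.
  pose proof (forest_of_represents h Hv) as Hrep.
  split; [|split].
  - apply represents_conflict_free; auto.
  - destruct (coloring_uses_at_most _ _ (Nat.log2 (cur_size h)) Hrep) as (cs & Hl & Hc);
      [eauto using height_le_log2 |].
    exists cs. split; [unfold logbound; lia | exact Hc].
  - intros u Hv'. destruct (update_recolorings h u Hv Hv') as (L & Hl & HL).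
    exists L. split; [|exact HL].
    pose proof (log2_cur_size_step h u). unfold logbound. lia.
Qed.
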